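(* Let $p$ be a positive integer and $\mathbb{K}$ a field with $\#\mathbb{K}>p$. Let $E$ be an $n$-dimensional $\mathbb{K}$-vector space and $(E_i)_{i\in I}$ a family of $(n-1)p+1$ linear subspaces of $E$ in which exactly $p+1$ subspaces have dimension $n-1$ and, for each $k\in\{1,\dots,n-2\}$, exactly $p$ subspaces have dimension $k$. Then $E\not\subset\bigcup_{i\in I}E_i$. Consequently, if $(E_i)_{i\in I}$ is a family of $(n-1)p$ linear subspaces of $E$ in which, for each $k\in\{1,\dots,n-1\}$, exactly $p$ subspaces have dimension $k$, then there exists a basis of $E$ none of whose vectors lies in $\bigcup_{i\in I}E_i$. *)

From HB Require Import structures.
From mathcomp Require Import all_boot all_order all_algebra.
Set Implicit Arguments. Unset Strict Implicit. Unset Printing Implicit Defensive.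
Import GRing.Theory.

(* "#K > p": the (possibly infinite) type K has at least p+1 distinct elements. *)
Definition card_gt (K : eqType) (p : nat) : Prop :=
  exists s : seq K, uniq s /\ (p < size s)%N.

From HB Require Import structures.
From mathcomp Require Import all_boot all_order all_algebra.
From mathcomp Require Import zify.
Import GRing.Theory.
Set Implicit Arguments. Unset Strict Implicit. Unset Printing Implicit Defensive.

(* Give a subspace V the weight (p+1)^(dim V - 1).  The heart of the proof is a
   counting argument (avoid_off_hyperplane): fix a hyperplane H with a basis b
   and p+1 distinct scalars c_0..c_p, pick e outside H, and look at the
   (p+1)^(dim H) points e + sum_j c_(s j) b_j.  A subspace contained in H
   contains none of them, and any other subspace V meets e + H in an affine
   subspace of dimension dim V - 1, which contains at most (p+1)^(dim V - 1) of
   them (grid_affine_bound, by induction on the dimension).  Hence if the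
   members of the family not contained in H weigh less than (p+1)^(dim H), some
   point of the grid avoids the whole family.

   The two statements of the theorem then follow by counting weights
   (weight_hyperplane_profile, weight_uniform_profile):
   - with p+1 hyperplanes and p subspaces of each dimension 1..n-2, take H to
     be one of the hyperplanes; the others weigh (p+1)^(n-1) - 1;
   - with p subspaces of each dimension 1..n-1, the whole family weighs
     (p+1)^(n-1) - 1, so a basis avoiding it is built one vector at a time,
     each time off a hyperplane containing the vectors already chosen
     (avoiding_basis). *)

Lemma geometric_weights (p m : nat) :
  (\sum_(1 <= k < m.+1) p * p.+1 ^ k.-1).+1 = p.+1 ^ m.
Proof.
elim: m => [|m IH]; first by rewrite big_geq.
by rewrite big_nat_recr //= -addSn IH expnS mulSn addnC.
Qed.

Section Counting.

Variables (I : finType) (d : I -> nat).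

Let cnt k := #|[set i | d i == k]|.

Lemma sum_by_value (m N : nat) (h : nat -> nat) :
  \sum_(i | m <= d i < N) h (d i) = \sum_(m <= k < N) cnt k * h k.
Proof.
elim: N => [|N IH]; first by rewrite big_geq // big_pred0 // => i; rewrite ltn0 andbF.
have [ltNm | lemN] := ltnP N m.
  rewrite big_geq // big_pred0 // => i; apply/negP => /andP[le lt].
  by move: (leq_ltn_trans le lt); rewrite ltnS leqNgt ltNm.
rewrite big_nat_recr //= -IH (bigID (fun i => d i == N)) /= addnC; congr (_ + _).
  apply: eq_bigl => i; rewrite ltnS (leq_eqVlt (d i)) andb_orr andb_orl.
  by case: (eqVneq (d i) N) => [->|_]; rewrite ?ltnn ?andbF ?andbT ?orbF.
rewrite /cnt -sum_nat_const; apply: eq_big => [i|i /andP[_ /eqP->] //].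
by rewrite inE andb_idl // => /eqP->; rewrite lemN ltnS leqnn.
Qed.

(* If the counts of the values in [m, N) already exhaust I, then every d i lies
   in [m, N), so any sum over I regroups along these values only. *)
Lemma sum_over_profile (m N : nat) (h : nat -> nat) :
  #|I| = \sum_(m <= k < N) cnt k -> \sum_i h (d i) = \sum_(m <= k < N) cnt k * h k.
Proof.
move=> cardI; rewrite -sum_by_value; apply: eq_bigl => i.
have := sum_by_value m N (fun=> 1); rewrite sum1_card.
rewrite (eq_bigr _ (fun k _ => muln1 (cnt k))) -cardI => /subset_cardP in_range.
by have := in_range (subset_predT _) i; rewrite !unfold_in.
Qed.

Variables (p m : nat).
Hypothesis cnt_uniform : forall k, 1 <= k <= m -> cnt k = p.

Let sum_uniform (w : nat -> nat) :
  \sum_(1 <= k < m.+1) cnt k * w k = \sum_(1 <= k < m.+1) p * w k.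
Proof. by apply: eq_big_nat => k range_k; rewrite cnt_uniform. Qed.

Let count_uniform : \sum_(1 <= k < m.+1) cnt k = m * p.
Proof.
transitivity (\sum_(1 <= k < m.+1) p); first by apply: eq_big_nat => k /cnt_uniform.
by rewrite sum_nat_const_nat subn1.
Qed.

Lemma weight_uniform_profile :
  #|I| = m * p -> (\sum_i p.+1 ^ (d i).-1).+1 = p.+1 ^ m.
Proof.
rewrite -count_uniform => /(sum_over_profile (fun k => p.+1 ^ k.-1))->.
by rewrite sum_uniform geometric_weights.
Qed.

Lemma weight_hyperplane_profile :
  #|I| = m.+1 * p + 1 -> cnt m.+1 = p.+1 ->
  (\sum_i p.+1 ^ (d i).-1).+1 = p.+1 ^ m.+1 + p.+1 ^ m.
Proof.
move=> cardI cnt_top.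
have /(sum_over_profile (fun k => p.+1 ^ k.-1))-> : #|I| = \sum_(1 <= k < m.+2) cnt k.
  by rewrite big_nat_recr //= count_uniform cnt_top cardI mulSn; lia.
by rewrite big_nat_recr //= sum_uniform cnt_top -addSn geometric_weights expnS addnC.
Qed.

End Counting.

Lemma card_bigcup_le (T J : finType) (A : J -> {set T}) :
  (#|\bigcup_j A j| <= \sum_j #|A j|)%N.
Proof.
elim/big_rec2: _ => [|j n U _ leUn]; first by rewrite cards0.
by rewrite (leq_trans (leq_card_setU (A j) U).1) ?leq_add2l.
Qed.

Local Open Scope ring_scope.

Lemma distinct_scalars (K : fieldType) (p : nat) :
  card_gt K p -> exists c : 'I_p.+1 -> K, injective c.
Proof.
case=> s [uniq_s size_s]; exists (fun t => nth 0 s t) => t u /eqP.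
by rewrite nth_uniq ?(leq_trans (ltn_ord _) size_s) // => /eqP/val_inj.
Qed.

Section Grid.

Variables (K : fieldType) (E : vectType K) (p m : nat).
Variables (c : 'I_p.+1 -> K) (b : m.-tuple E).
Hypotheses (c_inj : injective c) (free_b : free b).

Definition grid (s : {ffun 'I_m -> 'I_p.+1}) : E := \sum_(j < m) c (s j) *: b`_j.

Lemma coord_grid s j : coord b j (grid s) = c (s j).
Proof. exact: coord_sum_free. Qed.

Lemma grid_in_span s : grid s \in <<b>>%VS.
Proof.
by apply: memv_suml => j _; apply/memvZ/memv_span/mem_nth; rewrite size_tuple.
Qed.

Definition coord_ker (j : 'I_m) : {vspace E} := lker (linfun (coord b j : E -> K^o)).

Lemma memv_coord_ker j u : (u \in coord_ker j) = (coord b j u == 0).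
Proof. by rewrite memv_ker lfunE. Qed.

Lemma grid_coord_inj s t : (forall j, grid s - grid t \in coord_ker j) -> s = t.
Proof.
move=> ker_st; apply/ffunP => j; apply: c_inj; apply/eqP; rewrite -subr_eq0.
by have := ker_st j; rewrite memv_coord_ker linearB /= !coord_grid.
Qed.

Definition grid_in (a : E) (U : {vspace E}) := [set s | grid s - a \in U].

Lemma grid_in_diff a U s t :
  s \in grid_in a U -> t \in grid_in a U -> grid s - grid t \in U.
Proof. by rewrite !inE => sU tU; have := memvB sU tU; rewrite opprB addrA subrK. Qed.

Lemma grid_in_le1 a U :
  (forall j, (U <= coord_ker j)%VS) -> (#|grid_in a U| <= 1)%N.
Proof.
move=> U_ker; apply/card_le1_eqP => s t sU tU; apply: grid_coord_inj => j.
by have /subvP U_sub := U_ker j; apply: U_sub; exact: grid_in_diff tU sU.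
Qed.

(* Induction on d: either U has no coordinate at all, or some
   coordinate j does not vanish on U; the grid points of a + U with a fixed
   j-th index then lie in a translate of the smaller space U :&: coord_ker j. *)
Lemma grid_affine_bound d (U : {vspace E}) (a : E) :
  (\dim U <= d -> #|grid_in a U| <= p.+1 ^ d)%N.
Proof.
elim: d U a => [|d IH] U a dimU.
  apply: grid_in_le1 => j; move: dimU; rewrite leqn0 dimv_eq0 => /eqP->.
  exact: sub0v.
have [/forallP U_ker | ] := boolP [forall j, (U <= coord_ker j)%VS].
  by apply: leq_trans (grid_in_le1 _ U_ker) _; rewrite expn_gt0.
rewrite negb_forall => /existsP[j U_notker].
set U' := (U :&: coord_ker j)%VS.
have dimU' : (\dim U' <= d)%N.
  rewrite -ltnS (leq_trans _ dimU) // (ltn_leqif (dimv_leqif_sup (capvSl _ _))).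
  by rewrite subv_cap subvv.
pose slice t := [set s in grid_in a U | s j == t].
have cover_slices : grid_in a U \subset \bigcup_t slice t.
  by apply/subsetP => s sU; apply/bigcupP; exists (s j); rewrite // inE sU /=.
have -> : (p.+1 ^ d.+1 = \sum_(t < p.+1) p.+1 ^ d)%N.
  by rewrite sum_nat_const card_ord expnS.
apply: leq_trans (subset_leq_card cover_slices) _.
apply: leq_trans (card_bigcup_le _) _; apply: leq_sum => t _.
have [-> | [s0]] := set_0Vmem (slice t); first by rewrite cards0.
rewrite in_set => /andP[s0U /eqP s0j].
apply: leq_trans (IH U' (grid s0) dimU'); apply/subset_leq_card/subsetP => s.
rewrite in_set => /andP[sU /eqP sj]; rewrite inE memv_cap (grid_in_diff sU s0U).
by rewrite memv_coord_ker linearB /= !coord_grid sj s0j subrr.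
Qed.

(* Off the span of b, an affine subspace meets the grid like an affine subspace
   of one dimension less: the grid points of -e + V, with e outside <<b>>, lie
   in a translate of V :&: <<b>>, a proper subspace of V. *)
Lemma grid_off_span_bound (e : E) (V : {vspace E}) :
  e \notin <<b>>%VS -> (#|grid_in (- e) V| <= p.+1 ^ (\dim V).-1)%N.
Proof.
move=> e_out; have [-> | [s0 s0V]] := set_0Vmem (grid_in (- e) V).
  by rewrite cards0.
have V_out : ~~ (V <= <<b>>)%VS.
  apply/subvPn; exists (grid s0 - - e); first by rewrite inE in s0V.
  apply: contra e_out => /memvB/(_ (grid_in_span s0)).
  by rewrite opprK addrC addKr.
have lt_cap : (\dim (V :&: <<b>>) < \dim V)%N.
  by rewrite (ltn_leqif (dimv_leqif_sup (capvSl _ _))) subv_cap subvv.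
have dim_cap : (\dim (V :&: <<b>>) <= (\dim V).-1)%N.
  by rewrite -ltnS (ltn_predK lt_cap).
apply: leq_trans (grid_affine_bound (grid s0) dim_cap).
apply/subset_leq_card/subsetP => s sV.
by rewrite inE memv_cap (grid_in_diff sV s0V) memvB ?grid_in_span.
Qed.

End Grid.

(* Every proper subspace of E lies in a hyperplane: add vectors outside it one
   at a time; each raises the dimension by one until a hyperplane is reached. *)
Lemma exists_hyperplane (K : fieldType) (E : vectType K) (W : {vspace E}) :
  (\dim W < \dim {:E})%N -> exists2 H : {vspace E}, (W <= H)%VS & (\dim H).+1 = \dim {:E}.
Proof.
have [k] := ubnP (\dim {:E} - \dim W); elim: k W => // k IH W codimW ltW.
have [hypW | not_hypW] := eqVneq (\dim W).+1 (\dim {:E}); first by exists W.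
have /subvPn[v _ vW] : ~~ ({:E} <= W)%VS.
  by apply/negP => /dimvS; rewrite leqNgt ltW.
set W' := (W + <[v]>)%VS.
have grow : (\dim W < \dim W')%N.
  rewrite (ltn_leqif (dimv_leqif_sup (addvSl _ _))); apply: contra vW => /subvP.
  by apply; apply: (subvP (addvSr W _)); apply: memv_line.
have step : (\dim W' <= (\dim W).+1)%N.
  by rewrite (leq_trans (dimv_add_leqif W <[v]>)) // dim_vline -addn1 leq_add2l leq_b1.
have codimW' : (\dim {:E} - \dim W' < k)%N by lia.
have ltW' : (\dim W' < \dim {:E})%N by move/eqP: not_hypW; lia.
have [H W'H hypH] := IH W' codimW' ltW'.
by exists H => //; apply: subv_trans W'H; apply: addvSl.
Qed.

(* Let H be a hyperplane and give a subspace V the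
   weight (p+1)^(dim V - 1).  If the subspaces of the family not contained in H
   weigh less than (p+1)^(dim H), some vector outside H avoids the whole family:
   a translate e + grid of (p+1)^(dim H) points off H cannot be covered, since
   each such subspace contains at most its weight of these points, and the
   subspaces inside H contain none of them. *)
Lemma avoid_off_hyperplane (K : fieldType) (E : vectType K) (p : nat)
    (H : {vspace E}) (I : finType) (F : I -> {vspace E}) :
  card_gt K p -> (\dim H).+1 = \dim {:E} ->
  (\sum_(i | ~~ (F i <= H)%VS) p.+1 ^ (\dim (F i)).-1 < p.+1 ^ \dim H)%N ->
  exists x, x \notin H /\ forall i, x \notin F i.
Proof.
move=> hK hypH light; have [c c_inj] := distinct_scalars hK.
pose b := vbasis H; have free_b : free b := basis_free (vbasisP H).
have span_b : <<b>>%VS = H := span_basis (vbasisP H).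
have /subvPn[e _ eH] : ~~ ({:E} <= H)%VS.
  by apply/negP => /dimvS; rewrite -hypH ltnn.
pose hits i := grid_in c b (- e) (F i).
have grid_H s : grid c b s \in H by have := grid_in_span c b s; rewrite span_b.
have off_H s : grid c b s - - e \notin H.
  by apply: contra eH => /memvB/(_ (grid_H s)); rewrite opprK addrC addKr.
have few_hits : (#|\bigcup_i hits i| < #|{ffun 'I_(\dim H) -> 'I_p.+1}|)%N.
  rewrite card_ffun !card_ord; apply: leq_ltn_trans (card_bigcup_le _) _.
  rewrite (bigID (fun i => (F i <= H)%VS)) /= big1 ?add0n => [|i FiH].
    apply: leq_ltn_trans light; apply: leq_sum => i _.
    by apply: grid_off_span_bound; rewrite ?span_b.
  apply/eqP; rewrite cards_eq0; apply/eqP/setP => s; rewrite !inE.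
  by apply: contraNF (off_H s); apply: (subvP FiH).
have /subsetPn[s _ s_free] : ~~ ([set: {ffun 'I_(\dim H) -> 'I_p.+1}] \subset \bigcup_i hits i).
  by apply/negP => /subset_leq_card; rewrite cardsT leqNgt few_hits.
exists (grid c b s - - e); split=> // i; apply: contra s_free => hit.
by apply/bigcupP; exists i; rewrite ?inE.
Qed.

(* If the whole family weighs less than (p+1)^(dim E - 1), a basis of E can be
   built vector by vector outside the family: the span of the vectors chosen so
   far lies in a hyperplane, off which avoid_off_hyperplane finds the next one. *)
Lemma avoiding_basis (K : fieldType) (E : vectType K) (p : nat)
    (J : finType) (G : J -> {vspace E}) :
  card_gt K p -> (\sum_j p.+1 ^ (\dim (G j)).-1 < p.+1 ^ (\dim {:E}).-1)%N ->
  exists b : seq E, basis_of fullv b /\ (forall x, x \in b -> forall j, x \notin G j).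
Proof.
move=> hK light.
have extend r : (r <= \dim {:E})%N -> exists b : seq E,
    [/\ size b = r, free b & forall x, x \in b -> forall j, x \notin G j].
  elim: r => [|r IH] le_r; first by exists [::]; rewrite /free span_nil dimv0.
  have [b [size_b free_b avoid_b]] := IH (ltnW le_r).
  have [H bH hypH] : exists2 H : {vspace E}, (<<b>> <= H)%VS & (\dim H).+1 = \dim {:E}.
    by apply: exists_hyperplane; rewrite (eqnP free_b) size_b.
  have [|x [xH avoid_x]] := avoid_off_hyperplane (F := G) hK hypH.
    rewrite -hypH /= in light; apply: leq_ltn_trans light.
    by rewrite [leqRHS](bigID (fun j => ~~ (G j <= H)%VS)) leq_addr.
  exists (x :: b); split=> [|//|y]; first by rewrite /= size_b.
    by rewrite free_cons free_b andbT; apply: contra xH; apply: (subvP bH).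
  by rewrite in_cons => /orP[/eqP->|/avoid_b].
have [b [size_b free_b avoid_b]] := extend _ (leqnn _).
by exists b; split=> //; rewrite basisEfree free_b subvf size_b leqnn.
Qed.

(* First part of the theorem, for dim E = m+2: one of the p+1 hyperplanes of the
   family serves as H in avoid_off_hyperplane; all other members together
   weigh (p+1)^(m+1) - 1. *)
Lemma avoid_hyperplane_profile (K : fieldType) (E : vectType K) (p m : nat)
    (I : finType) (F : I -> {vspace E}) :
  card_gt K p -> \dim {:E} = m.+2 -> #|I| = (m.+1 * p + 1)%N ->
  #|[set i | \dim (F i) == m.+1]| = p.+1 ->
  (forall k, (1 <= k <= m)%N -> #|[set i | \dim (F i) == k]| = p) ->
  exists x, forall i, x \notin F i.
Proof.
move=> hK dimE cardI cnt_top cnt_k.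
have total := weight_hyperplane_profile cnt_k cardI cnt_top.
have /set0Pn[i1] : [set i | \dim (F i) == m.+1] != set0 by rewrite -card_gt0 cnt_top.
rewrite inE => /eqP dim_i1; rewrite (bigD1 i1) //= dim_i1 in total.
have hyp_i1 : (\dim (F i1)).+1 = \dim {:E} by rewrite dim_i1 dimE.
have [|x [_ avoid_x]] := avoid_off_hyperplane (F := F) hK hyp_i1; last by exists x.
apply: (@leq_ltn_trans (\sum_(i | i != i1) p.+1 ^ (\dim (F i)).-1)).
  apply: (sub_le_big leqnn (fun x y => leq_addr y x)) => i.
  by apply: contraNneq => ->; apply: subvv.
by rewrite dim_i1; move: total => /=; lia.
Qed.

Unset Implicit Arguments.

Theorem mainTheorem12 (K : fieldType) (E : vectType K) (n p : nat)
    (hp : (0 < p)%N) (hK : card_gt K p) (hE : \dim (fullv : {vspace E}) = n) :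
  (forall (I : finType) (F : I -> {vspace E}),
      #|I| = ((n - 1) * p + 1)%N ->
      #|[set i | \dim (F i) == (n - 1)%N]| = p.+1 ->
      (forall k : nat, (1 <= k <= n - 2)%N -> #|[set i | \dim (F i) == k]| = p) ->
      exists x : E, forall i, x \notin F i)
  /\
  (forall (J : finType) (G : J -> {vspace E}),
      #|J| = ((n - 1) * p)%N ->
      (forall k : nat, (1 <= k <= n - 1)%N -> #|[set j | \dim (G j) == k]| = p) ->
      exists b : seq E, basis_of fullv b /\ (forall x, x \in b -> forall j, x \notin G j)).
Proof.
split=> [I F cardI cnt_top cnt_k | J G cardJ cnt_k].
- (* n >= 2, since otherwise the p+1 > 1 members of dimension n-1 = 0
     would not fit in a family of size 1. *)
  have top_fits : (p.+1 <= (n - 1) * p + 1)%N.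
    by rewrite -cnt_top -cardI; apply: max_card.
  have [m n_eq] : exists m, n = m.+2.
    by exists (n - 2)%N; nia.
  rewrite {}n_eq /= subn1 subn2 /= in hE cardI cnt_top cnt_k.
  exact: avoid_hyperplane_profile hK hE cardI cnt_top cnt_k.
- apply: avoiding_basis hK _; rewrite hE -subn1 -ltnS.
  by rewrite (weight_uniform_profile cnt_k) // mulnC.
Qed.
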